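(* Consider the diploid population model of the context with environment (A), and suppose one of the following holds: (a) $0<\alpha<1$, $\zeta(N)^{3-\alpha}/N^2\to0$ and $\limsup_{N\to\infty}\varepsilon_N/c_N<\infty$; (b) $1\le\alpha<2$, $\zeta(N)/N\to0$ and $\varepsilon_N=cN^{\alpha-2}(\mathbf 1\{\kappa>2\}+\mathbf 1\{\kappa=2\}\log N)$ for a fixed $c>0$. Then $$\limsup_{N\to\infty}\frac{N}{c_N}\,\mathbb E\Big[\frac{X_1(X_1-1)(X_1-2)}{S_N^3}\mathbf 1\{S_N\ge2N\}\Big]=0.$$
   Context: Population of $2N$ diploid individuals; each generation they form $N$ uniformly random parent pairs, pair $i$ produces $X_i$ diploid potential offspring (one gene copy from each parent, chosen uniformly from that parent's two copies), $S_N=X_1+\dots+X_N$; if $S_N\ge2N$, $2N$ potential offspring are sampled uniformly without replacement to survive, otherwise the population is unchanged; generations are independent. Environment (A): fix $0<\alpha<2\le\kappa$; with probability $\varepsilon_N\in(0,1)$ all $X_i$ are i.i.d. with law $\mathbb L(\alpha,\zeta(N))$, otherwise i.i.d. with law $\mathbb L(\kappa,\zeta(N))$. Here $X\vartriangleright\mathbb L(a,\zeta(N))$ means $\mathbb P(X\le\zeta(N))=1$, remaining mass outside $\{2,\dots,\zeta(N)\}$ on $\{0,1\}$, and $g_a(k)(k^{-a}-(1+k)^{-a})\le\mathbb P(X=k)\le f_a(k)(k^{-a}-(1+k)^{-a})$ for $2\le k\le\zeta(N)$, with $g_a\le f_a$ bounded positive functions, $\inf_k\sup_{i\ge k}f_a(i)<\infty$,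 $\sup_k\inf_{i\ge k}g_a(i)>0$, limits $\lim_kf_a(k),\lim_kg_a(k)$ existing and positive; $\mathbb E[X]>2$ is assumed. $c_N=\mathbb E[\nu_1(\nu_1-1)]/(8(2N-1))$ where $\nu_1$ is the number of surviving offspring of pair 1 (the probability that two gene copies in distinct individuals derive from the same parental gene copy). *)

From HB Require Import structures.
From mathcomp Require Import all_boot all_order all_algebra.
From mathcomp Require Import all_classical all_reals all_analysis.

Set Implicit Arguments.
Unset Strict Implicit.
Unset Printing Implicit Defensive.

Import Order.TTheory GRing.Theory Num.Theory.
Import numFieldNormedType.Exports.
Local Open Scope classical_set_scope.
Local Open Scope ring_scope.

(* A configuration of offspring numbers (X_1,...,X_N) with values in
   {0,...,z} (z = zeta(N)); the laws are supported on {0..z}. *)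

Definition Xi (N z : nat) (t : N.-tuple 'I_z.+1) (i : nat) : nat :=
  nth 0%N (map (@nat_of_ord z.+1) t) i.

Definition X1 (N z : nat) (t : N.-tuple 'I_z.+1) : nat := Xi t 0.

Definition SN (N z : nat) (t : N.-tuple 'I_z.+1) : nat :=
  (\sum_(x <- t) nat_of_ord x)%N.

Definition iid_weight {R : realType} (N z : nat) (p : nat -> R)
  (t : N.-tuple 'I_z.+1) : R :=
  \prod_(x <- t) p (nat_of_ord x).

(* environment (A): with prob. eps all X_i iid ~ pa, otherwise iid ~ pk *)
Definition env_weight {R : realType} (N z : nat) (eps : R) (pa pk : nat -> R)
  (t : N.-tuple 'I_z.+1) : R :=
  eps * iid_weight pa t + (1 - eps) * iid_weight pk t.

Definition EA {R : realType} (N z : nat) (eps : R) (pa pk : nat -> R)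
  (F : N.-tuple 'I_z.+1 -> R) : R :=
  \sum_(t : N.-tuple 'I_z.+1) env_weight eps pa pk t * F t.

(* E[ nu_1 (nu_1 - 1) | X ] : given S_N >= 2N, 2N of the S_N potential
   offspring are sampled uniformly without replacement, so nu_1 is
   hypergeometric(S_N, X_1, 2N); if S_N < 2N the population is unchanged
   and no coalescence occurs (nu_1 contributes 0). *)
Definition nu1_fact2_cond {R : realType} (N z : nat) (t : N.-tuple 'I_z.+1) : R :=
  let S := SN t in let x := X1 t in
  if (2 * N <= S)%N then
    \sum_(j < x.+1 | (j <= 2 * N)%N)
      ((j * (j - 1))%N%:R * ('C(x, j) * 'C(S - x, 2 * N - j))%N%:R
        / ('C(S, 2 * N))%:R)
  else 0.

Definition cN {R : realType} (N z : nat) (eps : R) (pa pk : nat -> R) : R :=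
  @EA R N z eps pa pk (@nu1_fact2_cond R N z) / (8 * (2 * N%:R - 1)).

Definition E3 {R : realType} (N z : nat) (eps : R) (pa pk : nat -> R) : R :=
  @EA R N z eps pa pk (fun t =>
    if (2 * N <= SN t)%N then
      (X1 t * (X1 t - 1) * (X1 t - 2))%N%:R / (SN t)%:R ^+ 3
    else 0).

Definition fg_admissible {R : realType} (f g : nat -> R) : Prop :=
  (forall k, 0 < g k) /\ (forall k, g k <= f k) /\
  (exists M : R, forall k, f k <= M) /\
  (limn_esup (fun k => (f k)%:E) < +oo)%E /\
  (0 < limn_einf (fun k => (g k)%:E))%E /\
  (exists lf : R, 0 < lf /\ f @ \oo --> lf) /\
  (exists lg : R, 0 < lg /\ g @ \oo --> lg).

Definition law_L {R : realType} (a : R) (f g : nat -> R) (z : nat)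
  (p : nat -> R) : Prop :=
  [/\ (forall k, 0 <= p k),
      (forall k, (z < k)%N -> p k = 0),
      \sum_(k < z.+1) p k = 1,
      (forall k : nat, (2 <= k <= z)%N ->
         g k * (k%:R `^ (- a) - (k.+1)%:R `^ (- a)) <= p k /\
         p k <= f k * (k%:R `^ (- a) - (k.+1)%:R `^ (- a))) &
      2 < \sum_(k < z.+1) (k%:R * p k)].

From HB Require Import structures.
From mathcomp Require Import all_boot all_order all_algebra.
From mathcomp Require Import all_classical all_reals all_analysis.
From mathcomp Require Import zify ring lra.

(* Given the offspring numbers X, the number nu_1 of surviving offspring of
   pair 1 is hypergeometric, so on {S_N >= 2N} its second factorial moment is
   X_1 (X_1 - 1) 2N (2N - 1) / (S_N (S_N - 1)).  As X_1 - 2 <= zeta(N) and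
   2N <= S_N, the integrand of E[X_1 (X_1 - 1) (X_1 - 2) / S_N^3; S_N >= 2N]
   is at most zeta(N) / (2N 2N (2N - 1)) times that moment, and averaging gives
   N E[...] / c_N <= 2 zeta(N) / N for every N.  Both regimes force
   zeta(N) / N -> 0 (in (a) because zeta^2 <= zeta^(3 - alpha)). *)

Set Implicit Arguments.
Unset Strict Implicit.
Unset Printing Implicit Defensive.

Import Order.TTheory GRing.Theory Num.Theory.
Import numFieldNormedType.Exports.

Lemma mul_bin_fact2 n k :
  (k.+2 * k.+1 * 'C(n, k.+2) = n * (n - 1) * 'C(n - 2, k))%N.
Proof.
rewrite subn1 subn2 (mulnC k.+2) -mulnA -mul_bin_diag mulnCA -mul_bin_diag.
by rewrite mulnA.
Qed.

Lemma big_ord_le_cond_widen (V : nmodType) (F : nat -> V) x n :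
  (forall j, x < j -> F j = 0%R) ->
  (\sum_(j < x.+1 | (j <= n)%N) F j = \sum_(j < n.+1) F j)%R.
Proof.
move=> Fx0; rewrite -(big_mkord (fun j => j <= n)) -(big_mkord xpredT).
rewrite (big_nat_widen 0 _ (x + n).+1) ?ltnS ?leq_addr //.
rewrite [RHS](big_nat_widen 0 _ (x + n).+1) ?ltnS ?leq_addl //.
rewrite big_mkcond [RHS]big_mkcond /=; apply: eq_bigr => j _; rewrite !ltnS.
by case: (leqP j x) => [|/Fx0->]; rewrite ?andbT ?andbF //; case: ifP.
Qed.

Lemma hypergeometric_fact2 x l n :
  \sum_(j < n.+3) j * (j - 1) * ('C(x, j) * 'C(l, n.+2 - j))
  = x * (x - 1) * 'C(x + l - 2, n).
Proof.
rewrite 2!big_ord_recl /= !add0n.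
under eq_bigr => i _ do
  rewrite /bump /= !add1n subn1 !subSS mulnA mul_bin_fact2 -mulnA.
rewrite -big_distrr /= binomial.Vandermonde.
case: x => [|[|x]] //.
by rewrite !addSn !subSS !subn0.
Qed.

Local Open Scope classical_set_scope.
Local Open Scope ring_scope.

Lemma X1_le_SN N z (t : N.-tuple 'I_z.+1) : (X1 t <= SN t)%N.
Proof.
rewrite /X1 /Xi /SN; case: t => [[|a s] _] /=; first by rewrite big_nil.
by rewrite big_cons leq_addr.
Qed.

Lemma X1_le_z N z (t : N.-tuple 'I_z.+1) : (X1 t <= z)%N.
Proof. by rewrite /X1 /Xi; case: t => [[|a s] _] //=; rewrite -ltnS ltn_ord. Qed.

Section HypergeometricMoment.
Variables (R : realType) (N z : nat).

Lemma nu1_fact2_cond_ge0 (t : N.-tuple 'I_z.+1) : 0 <= @nu1_fact2_cond R N z t.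
Proof.
rewrite /nu1_fact2_cond /=; case: ifP => // _.
by apply: sumr_ge0 => j _; rewrite divr_ge0 ?mulr_ge0.
Qed.

Lemma nu1_fact2_condE (t : N.-tuple 'I_z.+1) : (0 < N)%N -> (2 * N <= SN t)%N ->
  @nu1_fact2_cond R N z t =
  (X1 t * (X1 t - 1) * (2 * N * (2 * N - 1)))%:R / (SN t * (SN t - 1))%:R.
Proof.
move=> N_gt0 le_2N_S; rewrite /nu1_fact2_cond /= le_2N_S -mulr_suml.
move: (X1_le_SN t) le_2N_S; set x := X1 t; set S := SN t => le_x_S.
have [m ->] : exists m, (2 * N = m.+2)%N by exists (2 * N - 2)%N; lia.
move=> le_m2_S.
under eq_bigr do rewrite -natrM.
pose F j := (j * (j - 1) * ('C(x, j) * 'C(S - x, m.+2 - j)))%N.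
rewrite -natr_sum (big_ord_le_cond_widen (F := F)); last first.
  by move=> j lt_x_j; rewrite /F bin_small // mul0n muln0.
rewrite hypergeometric_fact2 subnKC //.
have CS_neq0 : ('C(S, m.+2))%:R != 0 :> R by rewrite pnatr_eq0 -lt0n bin_gt0.
have SS1_neq0 : (S * (S - 1))%:R != 0 :> R.
  by rewrite pnatr_eq0 muln_eq0 negb_or; apply/andP; split; apply/eqP; lia.
apply/eqP; rewrite eqr_div // -!natrM eqr_nat; apply/eqP.
by rewrite -[RHS]mulnA subn1 /= mul_bin_fact2 mulnAC !mulnA.
Qed.

End HypergeometricMoment.

Lemma falling3_div_cube_le (R : realFieldType) (x z n S : nat) :
  (x <= z)%N -> (2 <= n <= S)%N ->
  (x * (x - 1) * (x - 2))%:R / S%:R ^+ 3 <=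
  z%:R / (n * (n * (n - 1)))%:R
    * ((x * (x - 1) * (n * (n - 1)))%:R / (S * (S - 1))%:R) :> R.
Proof.
move=> le_x_z /andP[le_2_n le_n_S].
have S3_gt0 : 0 < (S ^ 3)%:R :> R by rewrite ltr0n expn_gt0; lia.
have den_gt0 : 0 < (n * (n * (n - 1)) * (S * (S - 1)))%:R :> R.
  by rewrite ltr0n !muln_gt0; lia.
rewrite mulf_div -natrX -!natrM ler_pdivrMr // mulrAC ler_pdivlMr //.
rewrite -!natrM ler_nat.
have le_x2nS : ((x - 2) * n * (S * (S - 1)) <= z * S * (S * S))%N.
  by apply: leq_mul; [apply: leq_mul|]; lia.
rewrite [leqLHS](_ : _ = x * (x - 1) * (n * (n - 1)) * ((x - 2) * n * (S * (S - 1))))%N;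
  last by ring.
rewrite [leqRHS](_ : _ = x * (x - 1) * (n * (n - 1)) * (z * S * (S * S)))%N;
  last by ring.
exact: leq_mul.
Qed.

Section EnvironmentExpectation.
Variables (R : realType) (N z : nat) (eps : R) (pa pk : nat -> R).
Hypotheses (eps_ge0 : 0 <= eps) (eps_le1 : eps <= 1).
Hypotheses (pa_ge0 : forall k, 0 <= pa k) (pk_ge0 : forall k, 0 <= pk k).

Lemma env_weight_ge0 (t : N.-tuple 'I_z.+1) : 0 <= env_weight eps pa pk t.
Proof.
by rewrite addr_ge0 // mulr_ge0 ?subr_ge0 //; apply: prodr_ge0.
Qed.

Lemma ler_EA (F G : N.-tuple 'I_z.+1 -> R) :
  (forall t, F t <= G t) -> EA eps pa pk F <= EA eps pa pk G.
Proof. by move=> le_FG; apply: ler_sum => t _; rewrite ler_wpM2l ?env_weight_ge0. Qed.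

Lemma EA_ge0 (F : N.-tuple 'I_z.+1 -> R) :
  (forall t, 0 <= F t) -> 0 <= EA eps pa pk F.
Proof. by move=> F_ge0; apply: sumr_ge0 => t _; rewrite mulr_ge0 ?env_weight_ge0. Qed.

Lemma EAZ (c : R) (F : N.-tuple 'I_z.+1 -> R) :
  EA eps pa pk (fun t => c * F t) = c * EA eps pa pk F.
Proof. by rewrite /EA mulr_sumr; apply: eq_bigr => t _; rewrite mulrCA. Qed.

Hypothesis N_gt0 : (0 < N)%N.

Lemma E3_le_EA_nu1_fact2 :
  E3 N z eps pa pk <=
  z%:R / (2 * N * (2 * N * (2 * N - 1)))%:R * EA eps pa pk (@nu1_fact2_cond R N z).
Proof.
rewrite -EAZ; apply: ler_EA => t; case: ifP => le_2N_S.
  rewrite nu1_fact2_condE //; apply: falling3_div_cube_le; first exact: X1_le_z.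
  by rewrite le_2N_S andbT; lia.
by rewrite mulr_ge0 ?divr_ge0 ?nu1_fact2_cond_ge0.
Qed.

Lemma scaled_E3_bounds :
  0 <= N%:R / cN N z eps pa pk * E3 N z eps pa pk <= 2 * z%:R / N%:R.
Proof.
have EA_nu_ge0 := EA_ge0 (@nu1_fact2_cond_ge0 R N z).
have E3_ge0 : 0 <= E3 N z eps pa pk.
  by apply: EA_ge0 => t; case: ifP => // _; rewrite divr_ge0 ?exprn_ge0.
have N_ge1 : 1 <= N%:R :> R by rewrite ler1n.
have cN_den_gt0 : 0 < 8 * (2 * N%:R - 1) :> R by lra.
have cN_ge0 : 0 <= cN N z eps pa pk by rewrite divr_ge0 // ltW.
apply/andP; split; first by rewrite mulr_ge0 // divr_ge0.
have [->|cN_neq0] := eqVneq (cN N z eps pa pk) 0.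
  by rewrite invr0 mulr0 mul0r divr_ge0 ?mulr_ge0.
have EA_nuE : EA eps pa pk (@nu1_fact2_cond R N z)
              = cN N z eps pa pk * (8 * (2 * N%:R - 1)).
  by rewrite divfK ?gt_eqF.
apply: le_trans (ler_wpM2l _ E3_le_EA_nu1_fact2) _; first by rewrite divr_ge0.
rewrite EA_nuE !natrM natrB; last by lia.
have N_neq0 : N%:R != 0 :> R by rewrite pnatr_eq0 -lt0n.
have twoN1_neq0 : 2 * N%:R - 1 != 0 :> R by rewrite gt_eqF //; lra.
rewrite [leLHS](_ : _ = 2 * z%:R / N%:R) //.
by field; rewrite N_neq0 twoN1_neq0 cN_neq0.
Qed.

End EnvironmentExpectation.

Lemma natr_div_cvg0_of_powR (R : realType) (p : R) (u : nat -> nat) : 2 <= p ->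
  (fun n : nat => (u n)%:R `^ p / n%:R ^+ 2) @ \oo --> (0 : R) ->
  (fun n : nat => (u n)%:R / n%:R) @ \oo --> (0 : R).
Proof.
move=> le_2_p powR_cvg0.
have sqr_cvg0 : (fun n : nat => ((u n)%:R / n%:R) ^+ 2) @ \oo --> (0 : R).
  apply: (squeeze_cvgr _ (cvg_cst 0) powR_cvg0) => //; apply: nearW => n.
  rewrite sqr_ge0 expr_div_n ler_wpM2r ?invr_ge0 ?exprn_ge0 //.
  case: (u n) => [|k]; first by rewrite expr0n powR_ge0.
  by rewrite -powR_mulrn ?ler0n // ler_powR // ler1n.
have -> : (fun n : nat => (u n)%:R / n%:R : R)
          = Num.sqrt \o (fun n => ((u n)%:R / n%:R) ^+ 2).
  by apply/funext => n /=; rewrite sqrtr_sqr ger0_norm // divr_ge0.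
by rewrite -[X in _ --> X]sqrtr0; apply: continuous_cvg => //; exact: sqrt_continuous.
Qed.

Lemma limn_esup_squeeze0 (R : realType) (u v : nat -> R) :
  (\forall n \near \oo, 0 <= u n <= v n) -> v @ \oo --> 0 ->
  limn_esup (fun n => (u n)%:E) = 0%E.
Proof.
move=> uv v_cvg0.
have u_cvg0 : u @ \oo --> 0 by exact: (squeeze_cvgr uv (cvg_cst 0) v_cvg0).
have uE_cvg0 : (fun n => (u n)%:E) @ \oo --> 0%E.
  by apply: cvg_EFin u_cvg0; apply: nearW.
by have [_ ->] := cvg_limn_einf_sup uE_cvg0.
Qed.

Theorem lemma8 (R : realType) (alpha kappa : R)
  (f_a g_a f_k g_k : nat -> R) (zeta : nat -> nat) (eps : nat -> R)
  (pa pk : nat -> nat -> R) :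
  0 < alpha -> alpha < 2 -> 2 <= kappa ->
  fg_admissible f_a g_a -> fg_admissible f_k g_k ->
  (forall N, 0 < eps N < 1) ->
  (forall N, law_L alpha f_a g_a (zeta N) (pa N)) ->
  (forall N, law_L kappa f_k g_k (zeta N) (pk N)) ->
  ( (alpha < 1 /\
     (fun N : nat => (zeta N)%:R `^ (3 - alpha) / (N%:R ^+ 2)) @ \oo --> (0 : R) /\
     (limn_esup (fun N : nat =>
        (eps N / cN N (zeta N) (eps N) (pa N) (pk N))%:E) < +oo)%E)
    \/
    (1 <= alpha /\
     (fun N : nat => (zeta N)%:R / N%:R) @ \oo --> (0 : R) /\
     exists c : R, 0 < c /\
       \forall N \near \oo,
         eps N = c * N%:R `^ (alpha - 2) *
           ((if 2 < kappa then 1 else 0) + (if kappa == 2 then ln N%:R else 0))) ) ->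
  limn_esup (fun N : nat =>
    (N%:R / cN N (zeta N) (eps N) (pa N) (pk N)
       * E3 N (zeta N) (eps N) (pa N) (pk N))%:E) = 0%E.
Proof.
move=> _ _ _ _ _ eps_01 law_a law_k regime.
have zeta_N_cvg0 : (fun N : nat => (zeta N)%:R / N%:R) @ \oo --> (0 : R).
  case: regime => [[lt_alpha_1 [powR_cvg0 _]]|[_ [zeta_N_cvg0 _]]] //.
  by apply: natr_div_cvg0_of_powR powR_cvg0; lra.
apply: (limn_esup_squeeze0 (v := fun N => 2 * ((zeta N)%:R / N%:R))); last first.
  by rewrite -(mulr0 2); apply: cvgMr.
near=> N; have /andP[eps_gt0 eps_lt1] := eps_01 N.
have [pa_ge0 _ _ _ _] := law_a N; have [pk_ge0 _ _ _ _] := law_k N.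
rewrite mulrA; apply: scaled_E3_bounds; rewrite ?ltW //.
by near: N; exists 1%N.
Unshelve. all: end_near.
Qed.
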